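(* Let $\epsilon_1>0$ and let $\epsilon_5>0$ be a constant with $\left(\frac{\log e}{8}\right)\epsilon_5^4>14\epsilon_1$. Let $S\subseteq V$ be nonempty, let $v$ be uniform in $S$, and define $X_i,Y_i$ as in the context. If $\sum_{i=1}^n H(X_i\mid X_{<i},Y_{<i})\ge\left(1-\frac{6\epsilon_1}{\log n}\right)\log k$, then (for $n$ sufficiently large) all but at most $\epsilon_5 n$ of the variables $i\in[n]$ are typical.
   Context: Setting: variables $x_1,\dots,x_n$, constant-size alphabet $A$, $\rho=\sqrt n\log\log n$, $k=\binom n\rho$. $V$ is the set of pairs $v=(T,y)$ with $T\subseteq[n]$, $|T|=\rho$, $y:T\to A$. For $v=(T,y)$ uniform in $S\subseteq V$: $X_i$ is the indicator of $i\in T$, $Y_i=y(i)$ if $X_i=1$ and $Y_i=\bot$ otherwise. A prefix of length $i-1$ is a value $w_{i-1}$ of $(X_{<i},Y_{<i})$. A prefix $w_{i-1}$ is typical if $(1-\epsilon_5)\rho/n<\Pr[X_i=1\mid (X_{<i},Y_{<i})=w_{i-1}]<(1+\epsilon_5)\rho/n$. A variable $i$ is typical if $\sum_{\text{typical } w_{i-1}}\Pr[(X_{<i},Y_{<i})=w_{i-1}]\ge1-\epsilon_5$. $H$ denotes Shannon entropy, logs base 2. *)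

From mathcomp Require Import all_boot all_order all_algebra.
From mathcomp Require Import all_classical all_reals.
From mathcomp.analysis Require Import sequences exp.
Set Implicit Arguments. Unset Strict Implicit. Unset Printing Implicit Defensive.
Import Order.TTheory GRing.Theory Num.Theory.
Local Open Scope ring_scope.

Section Defs.
Variable R : realType.

Definition log2 (x : R) : R := ln x / ln 2.

Definition xlog2x (x : R) : R := if x == 0 then 0 else x * log2 x.

Definition rho (n : nat) : nat := Num.truncn (Num.sqrt (n%:R : R) * log2 (log2 n%:R)).

Definition kk (n : nat) : nat := 'C(n, rho n).

Variable A : finType.
Variable n : nat.

(* An element v = (T, y) of V is encoded as w : 'I_n -> option A,
   with T = {i | w i != None} and y i = the value in Some. *)
Definition elt := {ffun 'I_n -> option A}.

Definition Vset : {set elt} := [set w : elt | #|[set i | w i != None]| == rho n].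

(* X_i = indicator of i \in T ; Y_i = y(i) if i \in T, bot (= None) otherwise *)
Definition Xv (w : elt) (i : 'I_n) : bool := w i != None.
Definition Yv (w : elt) (i : 'I_n) : option A := w i.

Definition prefix_t := {ffun 'I_n -> option (bool * option A)}.
Definition prefix (i : 'I_n) (w : elt) : prefix_t :=
  [ffun j : 'I_n => if (j < i)%N then Some (Xv w j, Yv w j) else None].

Variable S : {set elt}.

Definition Pr (E : pred elt) : R := #|[set w in S | E w]|%:R / #|S|%:R.
Definition Prc (E F : pred elt) : R := Pr (predI E F) / Pr F.

Definition prefix_ev (i : 'I_n) (p : prefix_t) : pred elt := fun w => prefix i w == p.

Definition condH (i : 'I_n) : R :=
  \sum_(p : prefix_t) Pr (prefix_ev i p) *
     (- \sum_(b : bool) xlog2x (Prc (fun w => Xv w i == b) (prefix_ev i p))).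

Variable eps5 : R.

Definition typical_prefix (i : 'I_n) (p : prefix_t) : bool :=
  let q := Prc (fun w => Xv w i) (prefix_ev i p) in
  ((1 - eps5) * (rho n)%:R / n%:R < q) && (q < (1 + eps5) * (rho n)%:R / n%:R).

Definition typical_var (i : 'I_n) : bool :=
  \sum_(p : prefix_t | typical_prefix i p) Pr (prefix_ev i p) >= 1 - eps5.

End Defs.

(* Average over prefixes the relative entropy D(q || a) between the conditional
   law of X_i and Bernoulli(a), a = rho/n.  By the chain rule this average is the
   cross entropy of X_i against Bernoulli(a) minus ln 2 * H(X_i | X_<i, Y_<i);
   as sum_i E X_i = rho, summing over i gives n h(rho/n) - ln 2 * sum_i H, which
   the entropy hypothesis and n h(rho/n) - ln C(n, rho) <= rho^2/(n - rho)
   + ln rho + 1 = o(rho) bound by (eps5^4 / 9) rho.  Conversely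
   D(q || a) >= (sqrt q - sqrt a)^2 >= a eps5^2 / 9 outside the typical window,
   and an atypical variable puts mass more than eps5 there, so it contributes
   at least eps5^3 rho / (9 n): there are at most eps5 n of them. *)

From Pilot Require Import Defs.
From mathcomp Require Import all_boot all_order all_algebra.
From mathcomp Require Import all_classical all_reals.
From mathcomp.analysis Require Import sequences exp.
From mathcomp Require Import ring lra.
Set Implicit Arguments. Unset Strict Implicit. Unset Printing Implicit Defensive.
Import Order.TTheory GRing.Theory Num.Theory.
Local Open Scope ring_scope.

Section BernoulliDivergence.
Variable R : realType.

Definition xln (x : R) : R := if x == 0 then 0 else x * ln x.

Definition klB (a q : R) : R :=
  xln q + xln (1 - q) - q * ln a - (1 - q) * ln (1 - a).

Lemma ln_ge1V (x : R) : 0 < x -> 1 - x^-1 <= ln x.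
Proof.
move=> x0; have h : -1 < x^-1 - 1 by rewrite -subr_gt0 opprK subrK invr_gt0.
have := le_ln1Dx h; rewrite addrC subrK lnV ?posrE //; lra.
Qed.

Lemma ln_ratio_ge (x y : R) : 0 < x -> 0 < y -> x - y <= x * (ln x - ln y).
Proof.
move=> x0 y0; have := ln_ge1V (divr_gt0 x0 y0).
rewrite ln_div ?posrE // invf_div => h.
have -> : x - y = x * (1 - y / x) by field; rewrite gt_eqF.
by apply: ler_wpM2l => //; apply: ltW.
Qed.

Lemma xln_compl_ge (a q : R) : 0 < a < 1 -> q <= 1 ->
  a - q <= xln (1 - q) - (1 - q) * ln (1 - a).
Proof.
move=> /andP[_ a1] q1; rewrite /xln.
have [E|q1'] := eqVneq (1 - q) 0; first by rewrite E mul0r; lra.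
have qp : 0 < 1 - q by rewrite lt_neqAle eq_sym q1' subr_ge0 q1.
have ap : 0 < 1 - a by rewrite subr_gt0.
have := ln_ratio_ge qp ap; rewrite mulrBr; lra.
Qed.

(* Applying [ln_ratio_ge] to the square roots yields the Hellinger term. *)
Lemma xln_ge_hellinger (a q : R) : 0 < a -> 0 <= q ->
  (Num.sqrt q - Num.sqrt a) ^+ 2 - (a - q) <= xln q - q * ln a.
Proof.
move=> a0 q0; rewrite /xln.
have sa := sqr_sqrtr (ltW a0); have sq := sqr_sqrtr q0.
have [->|qn0] := eqVneq q 0.
  by rewrite sqrtr0 sub0r sqrrN sa mul0r; lra.
have qp : 0 < q by rewrite lt_neqAle eq_sym qn0 q0.
set r := Num.sqrt q in sq *; set s := Num.sqrt a in sa *.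
have rp : 0 < r by rewrite sqrtr_gt0.
have sp : 0 < s by rewrite sqrtr_gt0.
have h := ln_ratio_ge rp sp.
rewrite -sq -sa !lnXn // !mulr2n; nra.
Qed.

Lemma klB_ge_hellinger (a q : R) : 0 < a < 1 -> 0 <= q <= 1 ->
  (Num.sqrt q - Num.sqrt a) ^+ 2 <= klB a q.
Proof.
move=> ha /andP[q0 q1]; have := xln_compl_ge ha q1.
case/andP: ha => a0 _; have := xln_ge_hellinger a0 q0; rewrite /klB; lra.
Qed.

Lemma klB_ge0 (a q : R) : 0 < a < 1 -> 0 <= q <= 1 -> 0 <= klB a q.
Proof. by move=> ha hq; apply: le_trans (klB_ge_hellinger ha hq); apply: sqr_ge0. Qed.

(* The constant: (1 - e/2)^2 >= 1 - e and (1 + e/3)^2 <= 1 + e, so outside the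
   window sqrt q is at distance at least e sqrt a / 3 from sqrt a. *)
Lemma hellinger_ge_atypical (a q e : R) : 0 < e < 1 -> 0 < a -> 0 <= q ->
  ~~ (((1 - e) * a < q) && (q < (1 + e) * a)) ->
  a * e ^+ 2 / 9 <= (Num.sqrt q - Num.sqrt a) ^+ 2.
Proof.
move=> /andP[e0 e1] a0 q0 H.
have sa := sqr_sqrtr (ltW a0); have sq := sqr_sqrtr q0.
set r := Num.sqrt q in sq *; set s := Num.sqrt a in sa *.
have r0 : 0 <= r by rewrite sqrtr_ge0.
have s0 : 0 < s by rewrite sqrtr_gt0.
rewrite -sa; move: H; rewrite negb_and -!leNgt => /orP[H|H].
- have c0 : 0 <= (1 - e / 2) * s by apply: mulr_ge0; lra.
  have : r ^+ 2 <= ((1 - e / 2) * s) ^+ 2.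
    rewrite exprMn sq sa; apply: le_trans H _; rewrite ler_wpM2r ?(ltW a0) //; nra.
  rewrite ler_pXn2r ?nnegrE //; nra.
- have c0 : 0 <= (1 + e / 3) * s by apply: mulr_ge0; lra.
  have : ((1 + e / 3) * s) ^+ 2 <= r ^+ 2.
    rewrite exprMn sq sa; apply: le_trans H; rewrite ler_wpM2r ?(ltW a0) //; nra.
  rewrite ler_pXn2r ?nnegrE //; nra.
Qed.

End BernoulliDivergence.

Lemma ffact_le_exp n m : (n ^_ m <= n ^ m)%N.
Proof.
elim: m => [|m IH]; first by rewrite ffactn0.
by rewrite ffactnSr expnSr leq_mul // leq_subr.
Qed.

Lemma exp_le_ffact n m : ((n - m) ^ m <= n ^_ m)%N.
Proof.
elim: m => [|m IH]; first by rewrite ffactn0.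
rewrite ffactnSr expnSr leq_mul //; last by rewrite leq_sub2l.
apply: leq_trans IH; have [->//|m0] := posnP m.
by rewrite leq_exp2r // leq_sub2l.
Qed.

Section BinomialEstimates.
Variable R : realType.

Lemma ln_fact_le m : (0 < m)%N ->
  ln (m`!%:R : R) <= m%:R * ln m%:R - m%:R + ln m%:R + 1.
Proof.
elim: m => [//|m IH] _.
have [->|m0] := posnP m; first by rewrite [1`!]/= ln1; lra.
have mp : (0 : R) < m%:R by rewrite ltr0n.
have m1p : (0 : R) < m.+1%:R by rewrite ltr0n.
have := ln_ratio_ge m1p mp; have := IH m0.
rewrite factS natrM lnM ?posrE ?ltr0n ?fact_gt0 // -natr1; nra.
Qed.

Lemma ln_binom_le n r : (0 < n)%N -> (r <= n)%N ->
  ln ('C(n, r)%:R : R) <= r%:R * ln n%:R.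
Proof.
move=> n0 rn; rewrite mulr_natl -lnXn ?ltr0n // -natrX.
rewrite ler_ln ?posrE ?ltr0n ?bin_gt0 ?expn_gt0 ?n0 // ler_nat.
by apply: leq_trans (ffact_le_exp n r); rewrite -bin_ffact leq_pmulr ?fact_gt0.
Qed.

Lemma ln_binom_ge n r : (r < n)%N ->
  r%:R * ln (n%:R - r%:R) - ln (r`!%:R) <= ln ('C(n, r)%:R : R).
Proof.
move=> rn; have kp : (0 < 'C(n, r))%N by rewrite bin_gt0 ltnW.
rewrite lerBlDr -lnM ?posrE ?ltr0n ?fact_gt0 // -natrM mulr_natl.
rewrite -lnXn ?subr_gt0 ?ltr_nat // -natrB ?(ltnW rn) // -natrX.
rewrite ler_ln ?posrE ?ltr0n ?expn_gt0 ?subn_gt0 ?rn ?muln_gt0 ?kp ?fact_gt0 //.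
by rewrite ler_nat bin_ffact exp_le_ffact.
Qed.

(* [n h(r/n) - ln C(n, r)], with [h] the binary entropy in nats. *)
Lemma binom_entropy_gap_le n r : (0 < r)%N -> (r < n)%N ->
  - (r%:R * ln (r%:R / n%:R)) - (n%:R - r%:R) * ln (1 - r%:R / n%:R)
  - ln ('C(n, r)%:R : R)
  <= r%:R ^+ 2 / (n%:R - r%:R) + ln r%:R + 1.
Proof.
move=> r0 rn.
have rp : (0 : R) < r%:R by rewrite ltr0n.
have np : (0 : R) < n%:R by rewrite ltr0n (leq_trans r0 (ltnW rn)).
have nrp : (0 : R) < n%:R - r%:R by rewrite subr_gt0 ltr_nat.
have -> : 1 - r%:R / n%:R = (n%:R - r%:R) / n%:R :> R by field; rewrite gt_eqF.
rewrite !ln_div ?posrE //.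
have Hratio := ln_ratio_ge nrp np.
have Hlog : ln n%:R - ln (n%:R - r%:R) <= r%:R / (n%:R - r%:R) :> R.
  by rewrite ler_pdivlMr //; nra.
have := ler_wpM2l (ltW rp) Hlog; rewrite expr2 -mulrA.
have := ln_binom_ge rn; have := ln_fact_le r0; nra.
Qed.

End BinomialEstimates.

Section RhoAsymptotics.
Variable R : realType.

Lemma rho_bounds n (s : R) : 2 <= s -> s ^+ 4 = n%:R ->
  s ^+ 2 - 1 < (rho R n)%:R /\ (rho R n)%:R * ln 2 ^+ 2 <= 4 * s ^+ 3.
Proof.
move=> s2 s4.
have sp : 0 < s by apply: lt_le_trans s2.
have l2 : (0 : R) < ln 2 by rewrite ln_gt0 // ltr1n.
have sqrtn : Num.sqrt n%:R = s ^+ 2.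
  by rewrite -s4 (_ : 4 = 2 * 2)%N // exprM sqrtr_sqr ger0_norm // exprn_ge0 // ltW.
have ls2 : ln 2 <= ln s by rewrite ler_ln ?posrE.
have lns : ln s < s by exact: ln_sublinear.
set L := log2 (n%:R : R).
have LE : L = 4 * ln s / ln 2 by rewrite /L /log2 -s4 lnXn // mulr_natl.
have L2 : 2 <= L by rewrite LE ler_pdivlMr //; lra.
have LL1 : 1 <= log2 L.
  by rewrite /log2 ler_pdivlMr // mul1r ler_ln ?posrE //; lra.
have LLc : log2 L * ln 2 ^+ 2 <= 4 * s.
  have hL : ln L < L by apply: ln_sublinear; lra.
  have -> : log2 L * ln 2 ^+ 2 = ln L * ln 2 by rewrite /log2; field; rewrite gt_eqF.
  have LE' : L * ln 2 = 4 * ln s by rewrite LE; field; rewrite gt_eqF.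
  nra.
have x0 : 0 <= s ^+ 2 * log2 L by rewrite mulr_ge0 ?exprn_ge0 //; lra.
have /andP[rlo rhi] := truncn_itv x0.
rewrite /rho sqrtn -/L; split.
- rewrite -natr1 in rhi; have := exprn_ge0 2 (ltW sp); nra.
- have -> : 4 * s ^+ 3 = s ^+ 2 * (4 * s) by rewrite exprSr; ring.
  apply: le_trans (ler_wpM2r (exprn_ge0 2 (ltW l2)) rlo) _.
  by rewrite -mulrA ler_wpM2l ?exprn_ge0 // ltW.
Qed.

Lemma binom_slack_small (c eta : R) : 0 < c -> 0 < eta ->
  exists M : R, forall s r : R, M <= s -> s ^+ 2 - 1 < r -> r * c <= 4 * s ^+ 3 ->
  [/\ 0 < r, 2 * r <= s ^+ 4 & r ^+ 2 / (s ^+ 4 - r) + ln r + 1 <= eta * r].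
Proof.
move=> c0 eta0; exists (2 + 8 / c + 16 / (c * eta) + 20 / eta) => s r sM rlo rhi.
have h1 : 0 <= 8 / c by rewrite divr_ge0 // ltW.
have h2 : 0 <= 16 / (c * eta) by rewrite divr_ge0 // ltW // mulr_gt0.
have h3 : 0 <= 20 / eta by rewrite divr_ge0 // ltW.
have s2 : 2 <= s by lra.
have sp : 0 < s by lra.
have cs : 8 <= c * s by rewrite mulrC -ler_pdivrMr //; lra.
have ces : 16 <= c * eta * s by rewrite mulrC -ler_pdivrMr ?mulr_gt0 //; lra.
have es : 20 <= eta * s by rewrite mulrC -ler_pdivrMr //; lra.
have s3 : 0 < s ^+ 3 by rewrite exprn_gt0.
have s4 : s ^+ 4 = s * s ^+ 3 by rewrite exprS.
have r3 : 3 < r by nra.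
have rp : 0 < r by lra.
have r2N : 2 * r <= s ^+ 4.
  by rewrite -(ler_pM2l c0) s4; nra.
split => //.
have rNs : 4 * r <= eta * s ^+ 4.
  by rewrite -(ler_pM2l c0) s4; nra.
have Nr : 0 < s ^+ 4 - r by lra.
have gap : r ^+ 2 / (s ^+ 4 - r) <= eta * r / 2.
  have := ler_wpM2l (ltW rp) rNs.
  have : 0 <= eta * r * (s ^+ 4 - 2 * r) by rewrite !mulr_ge0 ?subr_ge0 // ltW.
  rewrite ler_pdivrMr // expr2; nra.
have lnr : ln r <= 4 * s.
  have : ln r <= ln (s ^+ 4) by rewrite ler_ln ?posrE ?exprn_gt0 //; lra.
  rewrite lnXn // -mulr_natl; have := ln_sublinear sp; lra.
have : 5 * s <= eta * r / 2 by nra.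
lra.
Qed.

Lemma rho_asymp (eta : R) : 0 < eta -> exists N : nat, forall n, (N <= n)%N ->
  [/\ (0 < rho R n)%N, (2 * rho R n <= n)%N &
      (rho R n)%:R ^+ 2 / (n%:R - (rho R n)%:R) + ln (rho R n)%:R + 1
        <= eta * (rho R n)%:R].
Proof.
move=> eta0; have l2 : (0 : R) < ln 2 by rewrite ln_gt0 // ltr1n.
have [M HM] := binom_slack_small (exprn_gt0 2 l2) eta0.
set M' := Num.max M 2.
exists (Num.truncn (M' ^+ 4)).+1 => n Nn.
have M'0 : 0 <= M' by rewrite le_max ler0n orbT.
have nM : M' ^+ 4 < n%:R by apply: lt_le_trans (truncnS_gt _) _; rewrite ler_nat.
set s := Num.sqrt (Num.sqrt (n%:R : R)).
have s0 : 0 <= s by rewrite sqrtr_ge0.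
have s4 : s ^+ 4 = n%:R.
  by rewrite (_ : 4 = 2 * 2)%N // exprM !sqr_sqrtr ?sqrtr_ge0 // ler0n.
have sM : M' <= s by rewrite -(ler_pXn2r (n := 4)) ?nnegrE // s4 ltW.
have /andP[sM1 s2] : (M <= s) && (2 <= s) by rewrite -ge_max.
have [rlo rhi] := rho_bounds s2 s4.
have [r0 r2n gap] := HM s _ sM1 rlo rhi.
split; first by rewrite -(ltr0n R).
- by rewrite -(ler_nat R) natrM -s4.
- by rewrite -s4.
Qed.

End RhoAsymptotics.

Section UniformProbability.
Variables (R : realType) (A : finType) (n : nat) (S : {set elt A n}).
Hypothesis S0 : S != finset.set0.

Local Notation Pr := (Pr R S).

Lemma card_sep_sum (P : pred (elt A n)) :
  #|[set w in S | P w]| = (\sum_(w in S) P w)%N.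
Proof.
rewrite -sum1_card big_mkcond [RHS]big_mkcond /=; apply: eq_bigr => w _.
by rewrite inE; case: (w \in S); case: (P w).
Qed.

Lemma eq_Pr (E E' : pred (elt A n)) : E =1 E' -> Pr E = Pr E'.
Proof.
by move=> h; rewrite /Defs.Pr; congr (_%:R / _); apply: eq_card => w; rewrite !inE h.
Qed.

Lemma card_S_gt0 : (0 : R) < #|S|%:R.
Proof. by rewrite ltr0n card_gt0. Qed.

Lemma Pr_ge0 E : 0 <= Pr E.
Proof. by rewrite /Defs.Pr divr_ge0. Qed.

Lemma le_Pr (E F : pred (elt A n)) : {subset E <= F} -> Pr E <= Pr F.
Proof.
move=> h; rewrite /Defs.Pr ler_wpM2r ?invr_ge0 // ler_nat subset_leq_card //.
by apply/fintype.subsetP => w; rewrite !inE => /andP[-> /h].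
Qed.

Lemma Pr_predT : Pr predT = 1.
Proof.
rewrite /Defs.Pr (_ : #|[set w in S | predT w]| = #|S|) ?divff ?gt_eqF ?card_S_gt0 //.
by apply: eq_card => w; rewrite !inE andbT.
Qed.

Lemma Pr_predC (E F : pred (elt A n)) :
  Pr (predI (predC E) F) = Pr F - Pr (predI E F).
Proof.
apply/eqP; rewrite eq_sym subr_eq; apply/eqP.
rewrite /Defs.Pr -mulrDl -natrD !card_sep_sum -big_split /=; congr (_%:R / _).
by apply: eq_bigr => w _; case: (E w); case: (F w).
Qed.

Lemma sum_Pr_prefix (E : pred (elt A n)) i :
  \sum_(p : prefix_t A n) Pr (predI E (prefix_ev i p)) = Pr E.
Proof.
rewrite /Defs.Pr -mulr_suml -natr_sum; congr (_%:R / _).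
under eq_bigr => p _ do rewrite card_sep_sum.
rewrite exchange_big card_sep_sum; apply: eq_bigr => w _ /=.
rewrite (bigD1 (Defs.prefix i w)) //= /prefix_ev eqxx andbT big1 ?addn0 //.
by move=> p /negbTE; rewrite eq_sym => ->; rewrite andbF.
Qed.

Definition Pprefix i p := Pr (prefix_ev i p).
Definition qX i p := Prc R S (fun w => Xv w i) (prefix_ev i p).
Definition EX i := Pr (fun w => Xv w i).

Lemma Pprefix_ge0 i p : 0 <= Pprefix i p.
Proof. exact: Pr_ge0. Qed.

Lemma sum_Pprefix i : \sum_p Pprefix i p = 1.
Proof. by rewrite -Pr_predT -(sum_Pr_prefix predT i); apply: eq_bigr => p _. Qed.

Lemma Pprefix_qX i p : Pprefix i p * qX i p = Pr (predI (fun w => Xv w i) (prefix_ev i p)).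
Proof.
rewrite /qX /Prc -/(Pprefix i p).
have [E|E] := eqVneq (Pprefix i p) 0; last by rewrite mulrC divfK.
have : Pr (predI (fun w => Xv w i) (prefix_ev i p)) <= Pprefix i p.
  by apply: le_Pr => w /andP[].
by rewrite E mul0r => h; apply: le_anti; rewrite Pr_ge0 h.
Qed.

Lemma sum_Pprefix_qX i : \sum_p Pprefix i p * qX i p = EX i.
Proof. by rewrite /EX -(sum_Pr_prefix _ i); apply: eq_bigr => p _; apply: Pprefix_qX. Qed.

Lemma qX_01 i p : 0 <= qX i p <= 1.
Proof.
rewrite /qX /Prc -/(Pprefix i p).
have [->|E] := eqVneq (Pprefix i p) 0; first by rewrite invr0 mulr0 lexx ler01.
have Pp0 : 0 < Pprefix i p by rewrite lt_neqAle eq_sym E Pprefix_ge0.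
rewrite divr_ge0 ?Pr_ge0 //= ler_pdivrMr // mul1r.
by apply: le_Pr => w /andP[].
Qed.

Lemma Prc_X1 i p : Prc R S (fun w => Xv w i == true) (prefix_ev i p) = qX i p.
Proof. by rewrite /qX /Prc; congr (_ / _); apply: eq_Pr => w /=; rewrite eqb_id. Qed.

Lemma Prc_X0 i p : Pprefix i p != 0 ->
  Prc R S (fun w => Xv w i == false) (prefix_ev i p) = 1 - qX i p.
Proof.
move=> h; rewrite /qX /Prc -/(Pprefix i p).
rewrite (@eq_Pr _ (predI (predC (fun w => Xv w i)) (prefix_ev i p))); last first.
  by move=> w /=; case: (Xv w i).
by rewrite Pr_predC -/(Pprefix i p) mulrBl divff.
Qed.

Lemma ln2_xlog2x (x : R) : ln 2 * xlog2x x = xln x.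
Proof.
have l2 : (0 : R) < ln 2 by rewrite ln_gt0 // ltr1n.
by rewrite /xlog2x /xln /log2; case: (x == 0); [rewrite mulr0 | field; rewrite gt_eqF].
Qed.

Lemma ln2_condH i : ln 2 * condH R S i =
  - \sum_p Pprefix i p * (xln (qX i p) + xln (1 - qX i p)).
Proof.
rewrite /condH mulr_sumr -sumrN; apply: eq_bigr => p _.
rewrite big_bool /= -/(Pprefix i p).
have [->|E] := eqVneq (Pprefix i p) 0; first by rewrite !mul0r mulr0 oppr0.
rewrite Prc_X1 Prc_X0 // -!ln2_xlog2x; ring.
Qed.

Definition avg_klB (a : R) i := \sum_p Pprefix i p * klB a (qX i p).

Lemma avg_klB_eq a i :
  avg_klB a i = - (EX i * ln a) - (1 - EX i) * ln (1 - a) - ln 2 * condH R S i.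
Proof.
rewrite ln2_condH opprK.
have cross : \sum_p (Pprefix i p * qX i p * ln a
      + (Pprefix i p - Pprefix i p * qX i p) * ln (1 - a))
    = EX i * ln a + (1 - EX i) * ln (1 - a).
  by rewrite big_split /= -!mulr_suml sumrB sum_Pprefix sum_Pprefix_qX.
transitivity (\sum_p Pprefix i p * (xln (qX i p) + xln (1 - qX i p)) - \sum_p
    (Pprefix i p * qX i p * ln a + (Pprefix i p - Pprefix i p * qX i p) * ln (1 - a))).
  by rewrite -sumrB; apply: eq_bigr => p _; rewrite /klB; ring.
by rewrite cross; ring.
Qed.

Lemma avg_klB_ge0 a i : 0 < a < 1 -> 0 <= avg_klB a i.
Proof.
by move=> ha; apply: sumr_ge0 => p _; rewrite mulr_ge0 ?Pprefix_ge0 ?klB_ge0 ?qX_01.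
Qed.

Lemma avg_klB_atypical (e : R) i : 0 < e < 1 ->
  let a := (rho R n)%:R / n%:R in 0 < a < 1 ->
  ~~ typical_var S e i -> e * (a * e ^+ 2 / 9) <= avg_klB a i.
Proof.
move=> he a ha; rewrite /typical_var -ltNge => ht.
set c := a * e ^+ 2 / 9.
have c0 : 0 <= c by rewrite /c divr_ge0 // mulr_ge0 ?sqr_ge0 // ltW; case/andP: ha.
rewrite /avg_klB (bigID (typical_prefix S e i)) /=.
have typ : 0 <= \sum_(p | typical_prefix S e i p) Pprefix i p * klB a (qX i p).
  by apply: sumr_ge0 => p _; rewrite mulr_ge0 ?Pprefix_ge0 ?klB_ge0 ?qX_01.
have atyp : \sum_(p | ~~ typical_prefix S e i p) Pprefix i p * c <=
            \sum_(p | ~~ typical_prefix S e i p) Pprefix i p * klB a (qX i p).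
  apply: ler_sum => p hp; rewrite ler_wpM2l ?Pprefix_ge0 //.
  apply: le_trans (klB_ge_hellinger ha (qX_01 i p)).
  apply: hellinger_ge_atypical => //; first by case/andP: ha.
    by case/andP: (qX_01 i p).
  by move: hp; rewrite /typical_prefix -/(qX i p) -!mulrA.
have mass : \sum_(p | ~~ typical_prefix S e i p) Pprefix i p =
            1 - \sum_(p | typical_prefix S e i p) Pprefix i p.
  by rewrite -(sum_Pprefix i) [X in _ = X - _](bigID (typical_prefix S e i)) /=; ring.
rewrite -mulr_suml mass in atyp.
have : e * c <= (1 - \sum_(p | typical_prefix S e i p) Pprefix i p) * c.
  by rewrite ler_wpM2r // /Pprefix; lra.
lra.
Qed.

Lemma sum_Xv w : w \in Vset R A n -> (\sum_i Xv w i)%N = rho R n.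
Proof.
rewrite inE => /eqP <-; rewrite -sum1_card [RHS]big_mkcond /=.
by apply: eq_bigr => j _; rewrite inE /Xv; case: (w j != None).
Qed.

Lemma sum_EX : S \subset Vset R A n -> \sum_i EX i = (rho R n)%:R.
Proof.
move=> SV; rewrite /EX /Defs.Pr -mulr_suml -natr_sum.
under eq_bigr => i _ do rewrite card_sep_sum.
rewrite exchange_big /=.
under eq_bigr => w wS do rewrite sum_Xv ?(fintype.subsetP SV w wS) //.
by rewrite sum_nat_const natrM mulrAC divff ?mul1r // gt_eqF // card_S_gt0.
Qed.

End UniformProbability.

Section EntropyDeficit.
Variables (R : realType) (A : finType) (n : nat) (S : {set elt A n}).
Hypotheses (S0 : S != finset.set0) (SV : S \subset Vset R A n).
Let r : R := (rho R n)%:R.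

Lemma sum_avg_klB :
  \sum_i avg_klB S (r / n%:R) i = - (r * ln (r / n%:R))
    - (n%:R - r) * ln (1 - r / n%:R) - ln 2 * \sum_i condH R S i.
Proof.
under eq_bigr => i _ do rewrite (avg_klB_eq S0).
have cross1 : \sum_i EX R S i * ln (r / n%:R) = r * ln (r / n%:R).
  by rewrite -mulr_suml sum_EX.
have cross0 : \sum_i (1 - EX R S i) * ln (1 - r / n%:R) = (n%:R - r) * ln (1 - r / n%:R).
  by rewrite -mulr_suml sumrB sum_EX // sumr_const card_ord -mulr_natl mulr1.
by rewrite !sumrB sumrN cross1 cross0 -mulr_sumr.
Qed.

Lemma card_atypical_le_sum_avg_klB (e : R) : 0 < e < 1 -> 0 < r / n%:R < 1 ->
  #|[set i : 'I_n | ~~ typical_var S e i]|%:R * (e * (r / n%:R * e ^+ 2 / 9))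
    <= \sum_i avg_klB S (r / n%:R) i.
Proof.
move=> he ha; rewrite (bigID (mem [set i : 'I_n | ~~ typical_var S e i])) /=.
rewrite -[leLHS]addr0 lerD //; last by apply: sumr_ge0 => i _; apply: avg_klB_ge0.
rewrite -sum1_card natr_sum mulr_suml; apply: ler_sum => i.
by rewrite inE mul1r; apply: avg_klB_atypical.
Qed.

Lemma sum_avg_klB_le (eps1 : R) : 0 < eps1 -> (0 < rho R n)%N -> (rho R n < n)%N ->
  (1 - 6 * eps1 / log2 n%:R) * log2 (kk R n)%:R <= \sum_i condH R S i ->
  \sum_i avg_klB S (r / n%:R) i <= r ^+ 2 / (n%:R - r) + ln r + 1 + 6 * eps1 * ln 2 * r.
Proof.
move=> e1p r0 rn H.
have l2 : (0 : R) < ln 2 by rewrite ln_gt0 // ltr1n.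
have n0 : (0 < n)%N by apply: leq_trans rn.
have lnn : (0 : R) < ln n%:R by rewrite ln_gt0 // ltr1n; apply: leq_trans rn.
have Hk := ln_binom_le R n0 (ltnW rn).
set lk := ln ('C(n, rho R n))%:R in Hk.
have := ler_wpM2l (ltW l2) H.
have -> : ln 2 * ((1 - 6 * eps1 / log2 n%:R) * log2 (kk R n)%:R)
   = lk - 6 * eps1 * ln 2 * (lk / ln n%:R).
  by rewrite /kk /log2 -/lk; field; rewrite !gt_eqF.
have : 6 * eps1 * ln 2 * (lk / ln n%:R) <= 6 * eps1 * ln 2 * r.
  by rewrite ler_wpM2l ?ler_pdivrMr // ltW // !mulr_gt0.
have := binom_entropy_gap_le R r0 rn; rewrite -/lk -/r sum_avg_klB; lra.
Qed.

End EntropyDeficit.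

Lemma eps_room_gt0 (R : realType) (eps1 eps5 : R) : 0 < eps1 ->
  (log2 (expR 1) / 8) * eps5 ^+ 4 > 14 * eps1 -> 0 < eps5 ^+ 4 / 9 - 6 * eps1 * ln 2.
Proof.
move=> e1p; have l2 : (0 : R) < ln 2 by rewrite ln_gt0 // ltr1n.
rewrite -(ltr_pM2r (mulr_gt0 (ltr0n R 8) l2)).
have -> : log2 (expR 1) / 8 * eps5 ^+ 4 * (8 * ln 2) = eps5 ^+ 4.
  by rewrite /log2 expRK; field; rewrite gt_eqF.
have := mulr_gt0 e1p l2; lra.
Qed.

Theorem mainTheorem5 (R : realType) (A : finType) (eps1 eps5 : R) :
  0 < eps1 -> 0 < eps5 ->
  (log2 (expR 1) / 8) * eps5 ^+ 4 > 14 * eps1 ->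
  exists N : nat, forall (n : nat), (N <= n)%N ->
  forall S : {set elt A n},
    S != finset.set0 -> S \subset Vset R A n ->
    \sum_(i < n) condH R S i >= (1 - 6 * eps1 / log2 n%:R) * log2 (kk R n)%:R ->
    #|[set i : 'I_n | ~~ typical_var S eps5 i]|%:R <= eps5 * n%:R.
Proof.
move=> e1p e5p hyp.
have [e51|e51] := leP 1 eps5.
  exists 0%N => n _ S _ _ _; apply: le_trans (_ : n%:R <= _); last by rewrite ler_peMl.
  by rewrite ler_nat (leq_trans (max_card _)) ?card_ord.
set eta := eps5 ^+ 4 / 9 - 6 * eps1 * ln 2.
have [N HN] := rho_asymp (eps_room_gt0 e1p hyp).
exists N => n Nn S S0 SV H.
have [r0 r2n slack] := HN n Nn.
have rn : (rho R n < n)%N by rewrite (leq_trans _ r2n) // mul2n -addnn -addn1 leq_add2l.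
set r : R := (rho R n)%:R in slack.
have rp : 0 < r by rewrite ltr0n.
have np : (0 : R) < n%:R by rewrite ltr0n (leq_trans r0 (ltnW rn)).
have ha : 0 < r / n%:R < 1 by rewrite divr_gt0 //= ltr_pdivrMr // mul1r ltr_nat.
have e5 : 0 < eps5 < 1 by rewrite e5p e51.
have lo := card_atypical_le_sum_avg_klB S0 e5 ha.
have up := sum_avg_klB_le S0 SV e1p r0 rn H.
have a0 : 0 < r / n%:R by case/andP: ha.
have c0 : 0 < eps5 * (r / n%:R * eps5 ^+ 2 / 9).
  by rewrite mulr_gt0 // divr_gt0 ?(mulr_gt0 a0 (exprn_gt0 2 e5p)) ?ltr0n.
rewrite -(ler_pM2r c0); apply: le_trans lo (le_trans up _).
have -> : eps5 * n%:R * (eps5 * (r / n%:R * eps5 ^+ 2 / 9)) = eps5 ^+ 4 / 9 * r.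
  by field; rewrite gt_eqF.
rewrite /eta in slack; lra.
Qed.
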